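(* $\mathsf{ACA}_0$ proves $\mathsf{EM}_\infty$.
   Context: $\mathbb{N}$ denotes the first-order universe. A coloring $c:[S]^2\to\mathbb{N}$ is \emph{transitive} if for all $x<y<z$ in $S$ with $c(x,y)=c(y,z)$ we have $c(x,z)=c(x,y)$. $\mathsf{EM}_\infty$: for every coloring $c:[\mathbb{N}]^2\to\mathbb{N}$ there is an infinite set $S$ such that $c\upharpoonright[S]^2$ is transitive. *)

(* We formalize "ACA_0 proves EM_infinity" semantically: by Goedel's
   completeness theorem for (two-sorted, Henkin-semantics) second-order
   arithmetic, ACA_0 |- phi iff phi holds in every L_2-structure satisfying
   the axioms of ACA_0. *)

Set Implicit Arguments.

Record L2structure := {
  num : Type;
  sets : Type;
  zero : num;
  one : num;
  add : num -> num -> num;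
  mul : num -> num -> num;
  lt : num -> num -> Prop;
  mem : num -> sets -> Prop
}.

(** * Syntax of L_2 (de Bruijn indices; number and set variables separate) *)
Inductive term : Type :=
  | tvar : nat -> term
  | tzero : term
  | tone : term
  | tadd : term -> term -> term
  | tmul : term -> term -> term.

Inductive formula : Type :=
  | feq : term -> term -> formula
  | flt : term -> term -> formula
  | fmem : term -> nat -> formula
  | fnot : formula -> formula
  | fand : formula -> formula -> formula
  | for_ : formula -> formula -> formula
  | fimp : formula -> formula -> formula
  | fall : formula -> formula
  | fex : formula -> formula
  | fallS : formula -> formula
  | fexS : formula -> formula.

Fixpoint arithmetical (f : formula) : Prop :=
  match f with
  | feq _ _ | flt _ _ | fmem _ _ => True
  | fnot g | fall g | fex g => arithmetical g
  | fand g h | for_ g h | fimp g h => arithmetical g /\ arithmetical h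
  | fallS _ | fexS _ => False
  end.

Definition scons {A : Type} (a : A) (e : nat -> A) : nat -> A :=
  fun n => match n with 0 => a | S k => e k end.

Section Semantics.
Variable A : L2structure.

Fixpoint teval (e : nat -> num A) (t : term) : num A :=
  match t with
  | tvar n => e n
  | tzero => zero A
  | tone => one A
  | tadd u v => add A (teval e u) (teval e v)
  | tmul u v => mul A (teval e u) (teval e v)
  end.

Fixpoint sat (e : nat -> num A) (E : nat -> sets A) (f : formula) : Prop :=
  match f with
  | feq u v => teval e u = teval e v
  | flt u v => lt A (teval e u) (teval e v)
  | fmem u i => mem A (teval e u) (E i)
  | fnot g => ~ sat e E g
  | fand g h => sat e E g /\ sat e E h
  | for_ g h => sat e E g \/ sat e E h
  | fimp g h => sat e E g -> sat e E h
  | fall g => forall m : num A, sat (scons m e) E g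
  | fex g => exists m : num A, sat (scons m e) E g
  | fallS g => forall X : sets A, sat e (scons X E) g
  | fexS g => exists X : sets A, sat e (scons X E) g
  end.

Definition basic_axioms : Prop :=
  (forall n : num A, add A n (one A) <> zero A) /\
  (forall m n : num A, add A m (one A) = add A n (one A) -> m = n) /\
  (forall m : num A, add A m (zero A) = m) /\
  (forall m n : num A, add A m (add A n (one A)) = add A (add A m n) (one A)) /\
  (forall m : num A, mul A m (zero A) = zero A) /\
  (forall m n : num A, mul A m (add A n (one A)) = add A (mul A m n) m) /\
  (forall m : num A, ~ lt A m (zero A)) /\
  (forall m n : num A, lt A m (add A n (one A)) <-> (lt A m n \/ m = n)).

Definition induction_axiom : Prop :=
  forall X : sets A,
    mem A (zero A) X ->
    (forall n : num A, mem A n X -> mem A (add A n (one A)) X) ->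
    forall n : num A, mem A n X.

(** Arithmetical comprehension: for every arithmetical formula phi(n)
    (with arbitrary number and set parameters; variable 0 is n),
    exists X forall n (n ∈ X <-> phi(n)).  X does not occur in phi. *)
Definition arithmetical_comprehension : Prop :=
  forall (phi : formula), arithmetical phi ->
  forall (e : nat -> num A) (E : nat -> sets A),
    exists X : sets A, forall n : num A, mem A n X <-> sat (scons n e) E phi.

Definition ACA0_model : Prop :=
  basic_axioms /\ induction_axiom /\ arithmetical_comprehension.

Definition pair (i j : num A) : num A :=
  add A (mul A (add A i j) (add A i j)) i.

(** A set C codes a coloring c : [N]^2 -> N: C is a set of pairs ((x,y),k)
    with x < y, and for each x < y there is exactly one k with ((x,y),k) ∈ C. *)
Definition is_coloring (C : sets A) : Prop :=
  (forall p : num A, mem A p C ->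
     exists x y k : num A, lt A x y /\ p = pair (pair x y) k) /\
  (forall x y : num A, lt A x y -> exists k : num A, mem A (pair (pair x y) k) C) /\
  (forall x y k k' : num A, lt A x y ->
     mem A (pair (pair x y) k) C -> mem A (pair (pair x y) k') C -> k = k').

Definition infinite_set (S : sets A) : Prop :=
  forall n : num A, exists m : num A, lt A n m /\ mem A m S.

Definition transitive_on (C S : sets A) : Prop :=
  forall x y z k : num A,
    mem A x S -> mem A y S -> mem A z S -> lt A x y -> lt A y z ->
    mem A (pair (pair x y) k) C -> mem A (pair (pair y z) k) C ->
    mem A (pair (pair x z) k) C.

Definition EM_infinity : Prop :=
  forall C : sets A, is_coloring C ->
    exists S : sets A, infinite_set S /\ transitive_on C S.

End Semantics.

From Stdlib Require Import Setoid Ring Classical.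

(* Inside a model of ACA_0 we run the greedy construction of an infinite transitive set.
   Points x_0 < x_1 < ... are chosen one by one.  A point x_i has finite type if some color
   occurs as c(x_i, z) for unboundedly many admissible z, and infinite type otherwise.  Every
   later point must respect x_i: against a point of finite type it takes the least such color,
   and against a point of infinite type it avoids the finitely many colors c(x_h, x_i), h < i,
   each of which occurs only boundedly often.  So admissible points stay unbounded, and x_(i+1)
   is the least of them.  If infinitely many points have infinite type, c(x, y) = c(y, z) never
   happens among them; otherwise cofinitely many have finite type, and among those
   c(x, z) = c(x, y).

   To keep everything arithmetical, the construction is described by its finite stages: pairs
   of numbers (F, G) coding, by divisibility, finite sets of primes (the points chosen and those
   of finite type) in which every point is the least admissible one given the earlier points
   and has the right type.  This condition is local, any two stages agree on their common
   initial segment, and the points of either type form a set by arithmetical comprehension. *)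

Section Model.
Variable A : L2structure.
Hypothesis HA : ACA0_model A.
Variable C : sets A.

Local Notation N := (num A).
Local Notation "𝟎" := (zero A).
Local Notation "𝟏" := (one A).
Local Infix "⊕" := (add A) (at level 50, left associativity).
Local Infix "⊗" := (mul A) (at level 40, left associativity).
Local Infix "≺" := (lt A) (at level 70).
Local Notation "a ≼ b" := (a ≺ b \/ a = b) (at level 70).

Section Robinson.
Let basic := proj1 HA.
Lemma succ_neq_0 n : n ⊕ 𝟏 <> 𝟎. Proof. apply basic. Qed.
Lemma succ_inj m n : m ⊕ 𝟏 = n ⊕ 𝟏 -> m = n. Proof. apply basic. Qed.
Lemma add_0_r m : m ⊕ 𝟎 = m. Proof. apply basic. Qed.
Lemma add_succ_r m n : m ⊕ (n ⊕ 𝟏) = (m ⊕ n) ⊕ 𝟏. Proof. apply basic. Qed.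
Lemma mul_0_r m : m ⊗ 𝟎 = 𝟎. Proof. apply basic. Qed.
Lemma mul_succ_r m n : m ⊗ (n ⊕ 𝟏) = m ⊗ n ⊕ m. Proof. apply basic. Qed.
Lemma nlt_0_r m : ~ m ≺ 𝟎. Proof. apply basic. Qed.
Lemma lt_succ_r m n : m ≺ n ⊕ 𝟏 <-> m ≼ n. Proof. apply basic. Qed.
End Robinson.

(** * Arithmetical definability *)

Lemma least_element (X : sets A) n : mem A n X ->
  exists m, mem A m X /\ forall k, k ≺ m -> ~ mem A k X.
Proof.
  intro Hn; apply NNPP; intro Hnone.
  (* Y = {k | no m < k lies in X} *)
  destruct (proj2 (proj2 HA) (fall (fimp (flt (tvar 0) (tvar 1)) (fnot (fmem (tvar 0) 0))))
              ltac:(simpl; tauto) (fun _ => n) (fun _ => X)) as [Y HY]; simpl in HY.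
  assert (Hbelow : forall k m, m ≺ k -> ~ mem A m X).
  { intro k; apply HY, (proj1 (proj2 HA)).
    - apply HY; intros m Hm; contradiction (nlt_0_r m).
    - intros j Hj; apply HY; intros m Hm HmX; apply lt_succ_r in Hm as [Hm | ->].
      + exact (proj1 (HY j) Hj m Hm HmX).
      + apply Hnone; exists j; split; [exact HmX | exact (proj1 (HY j) Hj)]. }
  exact (Hbelow (n ⊕ 𝟏) n (proj2 (lt_succ_r n n) (or_intror eq_refl)) Hn).
Qed.

Definition expresses (env : nat -> N) (P : Prop) (phi : formula) : Prop :=
  P <-> sat A env (fun _ => C) phi.

Definition definable (Q : N -> Prop) : Prop :=
  exists (e : nat -> N) (phi : formula),
    (forall n, expresses (scons n e) (Q n) phi) /\ arithmetical phi.

Lemma expresses_sat env phi : expresses env (sat A env (fun _ => C) phi) phi.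
Proof. unfold expresses; reflexivity. Qed.
Lemma expresses_not env P f : expresses env P f -> expresses env (~ P) (fnot f).
Proof. unfold expresses; simpl; tauto. Qed.
Lemma expresses_and env P Q f g :
  expresses env P f -> expresses env Q g -> expresses env (P /\ Q) (fand f g).
Proof. unfold expresses; simpl; tauto. Qed.
Lemma expresses_or env P Q f g :
  expresses env P f -> expresses env Q g -> expresses env (P \/ Q) (for_ f g).
Proof. unfold expresses; simpl; tauto. Qed.
Lemma expresses_imp env P Q f g :
  expresses env P f -> expresses env Q g -> expresses env (P -> Q) (fimp f g).
Proof. unfold expresses; simpl; tauto. Qed.
Lemma expresses_iff env P Q f g : expresses env P f -> expresses env Q g ->
  expresses env (P <-> Q) (fand (fimp f g) (fimp g f)).
Proof. unfold expresses; simpl; tauto. Qed.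
Lemma expresses_all env (P : N -> Prop) f :
  (forall m, expresses (scons m env) (P m) f) -> expresses env (forall m, P m) (fall f).
Proof. unfold expresses; simpl; intro H; split; intros H1 m; apply H; auto. Qed.
Lemma expresses_ex env (P : N -> Prop) f :
  (forall m, expresses (scons m env) (P m) f) -> expresses env (exists m, P m) (fex f).
Proof. unfold expresses; simpl; intro H; split; intros [m Hm]; exists m; apply H; auto. Qed.

Definition tpair (t u : term) : term := tadd (tmul (tadd t u) (tadd t u)) t.

Ltac lookup env x :=
  lazymatch env with
  | scons x _ => constr:(0)
  | scons _ ?r => let k := lookup r x in constr:(S k)
  | _ => fail 100 "unknown atom" x
  end.

Ltac reify_term env x :=
  lazymatch x with
  | add _ ?a ?b => let ta := reify_term env a in let tb := reify_term env b in constr:(tadd ta tb)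
  | mul _ ?a ?b => let ta := reify_term env a in let tb := reify_term env b in constr:(tmul ta tb)
  | pair _ ?a ?b => let ta := reify_term env a in let tb := reify_term env b in constr:(tpair ta tb)
  | zero _ => constr:(tzero)
  | one _ => constr:(tone)
  | _ => let k := lookup env x in constr:(tvar k)
  end.

Ltac reify :=
  lazymatch goal with
  | |- expresses _ (_ /\ _) _ => apply expresses_and; [reify | reify]
  | |- expresses _ (_ \/ _) _ => apply expresses_or; [reify | reify]
  | |- expresses _ (_ <-> _) _ => apply expresses_iff; [reify | reify]
  | |- expresses _ (~ _) _ => apply expresses_not; reify
  | |- expresses _ (?P -> ?Q) _ => apply expresses_imp; [reify | reify]
  | |- expresses _ (forall m : num _, _) _ => apply expresses_all; intro; cbv beta; reify
  | |- expresses _ (exists m : num _, _) _ => apply expresses_ex; intro; cbv beta; reify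
  | |- expresses ?env (@eq (num _) ?x ?y) _ =>
      let t := reify_term env x in let u := reify_term env y in
      exact (expresses_sat env (feq t u))
  | |- expresses ?env (lt _ ?x ?y) _ =>
      let t := reify_term env x in let u := reify_term env y in
      exact (expresses_sat env (flt t u))
  | |- expresses ?env (mem _ ?x C) _ =>
      let t := reify_term env x in exact (expresses_sat env (fmem t 0))
  | |- expresses _ ?P _ =>
      let P' := eval red in P in
      tryif constr_eq P P' then fail 100 "cannot reify" P else (change P with P'; reify)
  end.

Ltac collect_env acc :=
  match goal with
  | x : num _ |- _ => lazymatch acc with context [x] => fail | _ => collect_env (scons x acc) end
  | _ => acc
  end.

Ltac definability :=
  lazymatch goal with
  | |- definable _ =>
    let env := collect_env (fun _ : nat => zero A) in
    exists env; eexists; split; [intro; cbv beta; reify | cbn; tauto]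
  end.

Lemma definable_comprehension Q : definable Q -> exists X, forall n, mem A n X <-> Q n.
Proof.
  intros [e [phi [Hphi Harith]]].
  destruct (proj2 (proj2 HA) phi Harith e (fun _ => C)) as [X HX].
  exists X; intro n; rewrite HX; symmetry; apply Hphi.
Qed.

Lemma definable_induction Q : definable Q ->
  Q 𝟎 -> (forall n, Q n -> Q (n ⊕ 𝟏)) -> forall n, Q n.
Proof.
  intros HQ H0 HS n. destruct (definable_comprehension Q HQ) as [X HX].
  apply HX, (proj1 (proj2 HA)); [apply HX, H0 | intros m Hm; apply HX, HS, HX, Hm].
Qed.

Lemma definable_least Q : definable Q ->
  forall n, Q n -> exists m, Q m /\ forall k, k ≺ m -> ~ Q k.
Proof.
  intros HQ n Hn. destruct (definable_comprehension Q HQ) as [X HX].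
  destruct (least_element X n (proj2 (HX n) Hn)) as [m [Hm Hmin]].
  exists m; split; [apply HX, Hm | intros k Hk HQk; exact (Hmin k Hk (proj2 (HX k) HQk))].
Qed.

Lemma definable_not Q : definable Q -> definable (fun n => ~ Q n).
Proof.
  intros [e [phi [Hphi Harith]]]. exists e, (fnot phi); split; [|exact Harith].
  intro n; apply expresses_not, Hphi.
Qed.

Lemma definable_strong_induction Q : definable Q ->
  (forall n, (forall m, m ≺ n -> Q m) -> Q n) -> forall n, Q n.
Proof.
  intros HQ H n. apply NNPP; intro Hn.
  destruct (definable_least _ (definable_not Q HQ) n Hn) as [m [Hm Hmin]].
  apply Hm, H; intros k Hk. apply NNPP, Hmin, Hk.
Qed.

Ltac induction_on n :=
  revert n;
  match goal with |- forall n, @?Q n => apply (definable_induction Q); [definability | |] end.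

(** * Arithmetic of the model *)

Lemma add_0_l n : 𝟎 ⊕ n = n.
Proof. induction_on n; [apply add_0_r | intros n IH; rewrite add_succ_r, IH; reflexivity]. Qed.

Lemma add_succ_l m n : (m ⊕ 𝟏) ⊕ n = (m ⊕ n) ⊕ 𝟏.
Proof.
  revert m; induction_on n; [intro m; rewrite !add_0_r; reflexivity|].
  intros n IH m; rewrite !add_succ_r, IH; reflexivity.
Qed.

Lemma add_comm n m : n ⊕ m = m ⊕ n.
Proof.
  revert n; induction_on m; [intro n; rewrite add_0_r, add_0_l; reflexivity|].
  intros m IH n; rewrite add_succ_r, add_succ_l, IH; reflexivity.
Qed.

Lemma add_assoc a b c : a ⊕ (b ⊕ c) = (a ⊕ b) ⊕ c.
Proof.
  revert a b; induction_on c; [intros; rewrite !add_0_r; reflexivity|].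
  intros c IH a b; rewrite !add_succ_r, IH; reflexivity.
Qed.

Lemma mul_0_l n : 𝟎 ⊗ n = 𝟎.
Proof.
  induction_on n; [apply mul_0_r|].
  intros n IH; rewrite mul_succ_r, IH, add_0_r; reflexivity.
Qed.

Lemma mul_succ_l m n : (m ⊕ 𝟏) ⊗ n = m ⊗ n ⊕ n.
Proof.
  revert m; induction_on n; [intro m; rewrite !mul_0_r, add_0_r; reflexivity|].
  intros n IH m; rewrite !mul_succ_r, IH, <- !add_assoc, !add_succ_r, (add_comm n m).
  reflexivity.
Qed.

Lemma mul_comm n m : n ⊗ m = m ⊗ n.
Proof.
  revert n; induction_on m; [intro n; rewrite mul_0_r, mul_0_l; reflexivity|].
  intros m IH n; rewrite mul_succ_r, mul_succ_l, IH; reflexivity.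
Qed.

Lemma mul_add_distr_l a b c : a ⊗ (b ⊕ c) = a ⊗ b ⊕ a ⊗ c.
Proof.
  revert a b; induction_on c; [intros; rewrite add_0_r, mul_0_r, add_0_r; reflexivity|].
  intros c IH a b; rewrite add_succ_r, !mul_succ_r, IH, add_assoc; reflexivity.
Qed.

Lemma mul_assoc a b c : a ⊗ (b ⊗ c) = (a ⊗ b) ⊗ c.
Proof.
  revert a b; induction_on c; [intros; rewrite !mul_0_r; reflexivity|].
  intros c IH a b; rewrite !mul_succ_r, mul_add_distr_l, IH; reflexivity.
Qed.

Lemma mul_1_l n : 𝟏 ⊗ n = n.
Proof. rewrite <- (add_0_l 𝟏), mul_succ_l, mul_0_l, add_0_l; reflexivity. Qed.

Lemma model_semiring : semi_ring_theory 𝟎 𝟏 (add A) (mul A) (@eq N).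
Proof.
  constructor; [exact add_0_l | exact add_comm | exact add_assoc | exact mul_1_l
    | exact mul_0_l | exact mul_comm | exact mul_assoc |].
  intros n m p; rewrite (mul_comm (n ⊕ m) p), mul_add_distr_l, !(mul_comm p); reflexivity.
Qed.

Add Ring model_ring : model_semiring.

Lemma zero_or_succ n : n = 𝟎 \/ exists p, n = p ⊕ 𝟏.
Proof. induction_on n; [left; reflexivity | intros n _; right; exists n; reflexivity]. Qed.

Lemma add_cancel_l a b c : a ⊕ b = a ⊕ c -> b = c.
Proof.
  revert b c; induction_on a; [intros b c; rewrite !add_0_l; tauto|].
  intros a IH b c H; apply IH, succ_inj; rewrite <- !add_succ_l; exact H.
Qed.

Lemma lt_exists_add m n : m ≺ n <-> exists d, n = m ⊕ d ⊕ 𝟏.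
Proof.
  revert m; induction_on n.
  - intro m; split; [intro H; contradiction (nlt_0_r m)|].
    intros [d H]; contradiction (succ_neq_0 (m ⊕ d)); symmetry; exact H.
  - intros n IH m; rewrite lt_succ_r; split.
    + intros [H | ->]; [apply IH in H as [d ->]; exists (d ⊕ 𝟏) | exists 𝟎]; ring.
    + intros [d H]; apply succ_inj in H.
      destruct (zero_or_succ d) as [-> | [p ->]]; [right; rewrite H; ring|].
      left; apply IH; exists p; rewrite H; ring.
Qed.

Lemma le_exists_add a b : a ≼ b <-> exists d, b = a ⊕ d.
Proof.
  rewrite <- lt_succ_r, lt_exists_add; split; intros [d H]; exists d.
  - apply succ_inj; rewrite H; ring.
  - rewrite H; ring.
Qed.

Lemma lt_irrefl n : ~ n ≺ n.
Proof.
  intro H; apply lt_exists_add in H as [d H].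
  apply (succ_neq_0 d), (add_cancel_l n); rewrite add_0_r; symmetry; rewrite H at 1; ring.
Qed.

Lemma lt_trans a b c : a ≺ b -> b ≺ c -> a ≺ c.
Proof.
  rewrite !lt_exists_add; intros [d ->] [e ->]; exists (d ⊕ 𝟏 ⊕ e); ring.
Qed.

Lemma lt_asymm a b : a ≺ b -> ~ b ≺ a.
Proof. intros H1 H2; exact (lt_irrefl a (lt_trans _ _ _ H1 H2)). Qed.

Lemma lt_neq a b : a ≺ b -> a <> b.
Proof. intros H ->; exact (lt_irrefl b H). Qed.

Lemma le_lt_trans a b c : a ≼ b -> b ≺ c -> a ≺ c.
Proof. intros [H | ->] H2; [exact (lt_trans _ _ _ H H2) | exact H2]. Qed.

Lemma lt_le_trans a b c : a ≺ b -> b ≼ c -> a ≺ c.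
Proof. intros H [H2 | <-]; [exact (lt_trans _ _ _ H H2) | exact H]. Qed.

Lemma le_ngt a b : a ≼ b -> ~ b ≺ a.
Proof. intros [H | ->] H2; [exact (lt_asymm _ _ H H2) | exact (lt_irrefl _ H2)]. Qed.

Lemma le_antisymm a b : a ≼ b -> b ≼ a -> a = b.
Proof. intros [H | H] H2; [contradiction (le_ngt _ _ H2 H) | exact H]. Qed.

Lemma lt_succ_diag_r n : n ≺ n ⊕ 𝟏.
Proof. apply lt_succ_r; right; reflexivity. Qed.

Lemma lt_trichotomy m n : m ≺ n \/ m = n \/ n ≺ m.
Proof.
  revert n; induction_on m.
  - intro n; destruct (zero_or_succ n) as [-> | [p ->]]; [tauto|].
    left; apply lt_exists_add; exists p; ring.
  - intros m IH n; destruct (IH n) as [H | [-> | H]].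
    + apply lt_exists_add in H as [d ->].
      destruct (zero_or_succ d) as [-> | [p ->]]; [right; left; ring|].
      left; apply lt_exists_add; exists p; ring.
    + right; right; apply lt_succ_diag_r.
    + right; right; exact (lt_trans _ _ _ H (lt_succ_diag_r m)).
Qed.

Lemma nlt_ge a b : ~ a ≺ b -> b ≼ a.
Proof. destruct (lt_trichotomy a b) as [H | [-> | H]]; tauto. Qed.

Lemma le_succ_l a b : a ≺ b -> a ⊕ 𝟏 ≼ b.
Proof.
  rewrite lt_exists_add, le_exists_add; intros [d ->]; exists d; ring.
Qed.

Lemma le_add_r a b : a ≼ a ⊕ b.
Proof. apply le_exists_add; exists b; reflexivity. Qed.

Lemma le_add_l a b : b ≼ a ⊕ b.
Proof. apply le_exists_add; exists a; ring. Qed.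

Lemma le_0_l a : 𝟎 ≼ a.
Proof. apply le_exists_add; exists a; ring. Qed.

Lemma lt_0_succ a : 𝟎 ≺ a ⊕ 𝟏.
Proof. apply lt_exists_add; exists a; ring. Qed.

Lemma lt_0_1 : 𝟎 ≺ 𝟏.
Proof. rewrite <- (add_0_l 𝟏); apply lt_0_succ. Qed.

Lemma neq_0_lt_0 a : a <> 𝟎 -> 𝟎 ≺ a.
Proof. destruct (zero_or_succ a) as [-> | [p ->]]; [tauto | intros _; apply lt_0_succ]. Qed.

Lemma lt_1_r a : a ≺ 𝟏 -> a = 𝟎.
Proof.
  rewrite <- (add_0_l 𝟏), lt_succ_r; intros [H | H]; [contradiction (nlt_0_r a H) | exact H].
Qed.

Lemma add_lt_mono_r a b c : a ≺ b -> a ⊕ c ≺ b ⊕ c.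
Proof. rewrite !lt_exists_add; intros [d ->]; exists d; ring. Qed.

Lemma mul_lt_mono_pos_r a b c : 𝟎 ≺ c -> a ≺ b -> a ⊗ c ≺ b ⊗ c.
Proof.
  intros Hc H; apply lt_exists_add in H as [d ->].
  destruct (zero_or_succ c) as [-> | [p ->]]; [contradiction (lt_irrefl _ Hc)|].
  apply lt_exists_add; exists (d ⊗ (p ⊕ 𝟏) ⊕ p); ring.
Qed.

Lemma le_mul_pos_r a c : 𝟎 ≺ c -> a ≼ a ⊗ c.
Proof.
  intro Hc; destruct (zero_or_succ c) as [-> | [p ->]]; [contradiction (lt_irrefl _ Hc)|].
  apply le_exists_add; exists (a ⊗ p); ring.
Qed.

(** * Primes and finite sets *)

Definition divides (d n : N) : Prop := exists q, n = d ⊗ q.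

Definition prime (p : N) : Prop := 𝟏 ≺ p /\ forall d, divides d p -> d = 𝟏 \/ d = p.

Lemma division a b : 𝟎 ≺ b -> exists q r, a = q ⊗ b ⊕ r /\ r ≺ b.
Proof.
  intro Hb; induction_on a; [exists 𝟎, 𝟎; split; [ring | exact Hb]|].
  intros a [q [r [-> Hr]]]; destruct (le_succ_l _ _ Hr) as [H | <-].
  - exists q, (r ⊕ 𝟏); split; [ring | exact H].
  - exists (q ⊕ 𝟏), 𝟎; split; [ring | exact Hb].
Qed.

Lemma divides_le d n : divides d n -> 𝟎 ≺ n -> d ≼ n.
Proof.
  intros [q ->] Hn; destruct (zero_or_succ q) as [-> | [p ->]].
  - rewrite mul_0_r in Hn; contradiction (lt_irrefl _ Hn).
  - apply le_mul_pos_r, lt_0_succ.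
Qed.

Lemma divides_refl d : divides d d.
Proof. exists 𝟏; ring. Qed.

Lemma divides_trans a b c : divides a b -> divides b c -> divides a c.
Proof. intros [q ->] [r ->]; exists (q ⊗ r); ring. Qed.

Lemma divides_mul_r d a b : divides d a -> divides d (a ⊗ b).
Proof. intros [q ->]; exists (q ⊗ b); ring. Qed.

Lemma divides_mul_l d b : divides d (b ⊗ d).
Proof. exists b; ring. Qed.

Lemma divides_add_cancel_l d a b : divides d (a ⊕ b) -> divides d a -> divides d b.
Proof.
  intros [v Hv] [u ->]; destruct (classic (d = 𝟎)) as [-> | Hd].
  - exists 𝟎; rewrite mul_0_l, add_0_l in Hv; rewrite Hv; ring.
  - apply neq_0_lt_0 in Hd; destruct (lt_trichotomy v u) as [H | [-> | H]].
    + apply (mul_lt_mono_pos_r _ _ d Hd) in H; rewrite (mul_comm v), (mul_comm u), <- Hv in H.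
      contradiction (le_ngt _ _ (le_add_r (d ⊗ u) b) H).
    + exists 𝟎; apply (add_cancel_l (d ⊗ u)); rewrite Hv; ring.
    + apply lt_exists_add in H as [w ->]; exists (w ⊕ 𝟏).
      apply (add_cancel_l (d ⊗ u)); rewrite Hv; ring.
Qed.

Lemma prime_pos p : prime p -> 𝟎 ≺ p.
Proof. intros [H _]; exact (lt_trans _ _ _ lt_0_1 H). Qed.

(* The least positive d with p | d b divides every e with p | e b, in particular p and a. *)
Lemma prime_euclid p a b : prime p -> divides p (a ⊗ b) -> divides p a \/ divides p b.
Proof.
  intros Hp Hab; destruct (classic (divides p a)) as [Ha | Ha]; [left; exact Ha | right].
  assert (Ha0 : 𝟎 ≺ a) by (apply neq_0_lt_0; intros ->; apply Ha; exists 𝟎; ring).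
  assert (HD : definable (fun d => 𝟎 ≺ d /\ divides p (d ⊗ b))) by definability.
  destruct (definable_least _ HD a (conj Ha0 Hab)) as [d0 [[Hd0 Hd0b] Hmin]].
  assert (Hdiv : forall e, 𝟎 ≺ e -> divides p (e ⊗ b) -> divides d0 e).
  { intros e He Heb; destruct (division e d0 Hd0) as [q [r [He' Hr]]].
    destruct (classic (r = 𝟎)) as [-> | Hr0]; [exists q; rewrite He'; ring|].
    exfalso; apply (Hmin r Hr); split; [exact (neq_0_lt_0 r Hr0)|].
    apply (divides_add_cancel_l _ (q ⊗ (d0 ⊗ b))).
    - replace (q ⊗ (d0 ⊗ b) ⊕ r ⊗ b) with (e ⊗ b) by (rewrite He'; ring); exact Heb.
    - replace (q ⊗ (d0 ⊗ b)) with ((d0 ⊗ b) ⊗ q) by ring; apply divides_mul_r, Hd0b. }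
  destruct (proj2 Hp d0) as [-> | ->].
  - apply Hdiv; [exact (prime_pos p Hp) | apply divides_mul_r, divides_refl].
  - rewrite mul_1_l in Hd0b; exact Hd0b.
  - contradiction (Ha (Hdiv a Ha0 Hab)).
Qed.

Lemma exists_prime_divisor n : 𝟏 ≺ n -> exists p, prime p /\ divides p n.
Proof.
  intro Hn; assert (HD : definable (fun d => 𝟏 ≺ d /\ divides d n)) by definability.
  destruct (definable_least _ HD n (conj Hn (divides_refl n))) as [d0 [[Hd0 Hd0n] Hmin]].
  exists d0; split; [split; [exact Hd0|] | exact Hd0n].
  intros e He; destruct (lt_trichotomy e 𝟏) as [H | [H | H]]; [| left; exact H |].
  - apply lt_1_r in H as ->; destruct He as [q Hq]; rewrite mul_0_l in Hq.
    rewrite Hq in Hd0; contradiction (lt_asymm _ _ lt_0_1 Hd0).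
  - right; destruct (divides_le e d0 He (lt_trans _ _ _ lt_0_1 Hd0)) as [Hlt | Heq];
      [|exact Heq].
    contradiction (Hmin e Hlt (conj H (divides_trans _ _ _ He Hd0n))).
Qed.

Lemma exists_common_multiple n : exists m, 𝟎 ≺ m /\ forall k, 𝟎 ≺ k -> k ≼ n -> divides k m.
Proof.
  induction_on n.
  - exists 𝟏; split; [exact lt_0_1|]; intros k Hk Hk0; contradiction (le_ngt _ _ Hk0 Hk).
  - intros n [m [Hm Hdiv]]; exists (m ⊗ (n ⊕ 𝟏)); split.
    + exact (lt_le_trans _ _ _ Hm (le_mul_pos_r m _ (lt_0_succ n))).
    + intros k Hk [Hlt | ->]; [|apply divides_mul_l].
      apply divides_mul_r, Hdiv, lt_succ_r, Hlt; exact Hk.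
Qed.

Lemma exists_prime_gt n : exists p, prime p /\ n ≺ p.
Proof.
  destruct (exists_common_multiple n) as [m [Hm Hdiv]].
  destruct (exists_prime_divisor (m ⊕ 𝟏)) as [p [Hp Hpm]].
  { rewrite <- (add_0_l 𝟏) at 1; exact (add_lt_mono_r _ _ _ Hm). }
  exists p; split; [exact Hp|]; apply NNPP; intro Hpn; apply nlt_ge in Hpn.
  assert (H1 : divides p 𝟏) by exact (divides_add_cancel_l _ _ _ Hpm (Hdiv p (prime_pos p Hp) Hpn)).
  exact (le_ngt _ _ (divides_le _ _ H1 lt_0_1) (proj1 Hp)).
Qed.

Lemma prime_divides_prime p q : prime p -> prime q -> divides p q -> p = q.
Proof.
  intros [Hp _] [_ Hq] H; destruct (Hq p H) as [-> | ->]; [contradiction (lt_irrefl _ Hp)|].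
  reflexivity.
Qed.

Definition elem (x F : N) : Prop := prime x /\ divides x F.

Lemma elem_mul x F p : prime p -> (elem x (F ⊗ p) <-> elem x F \/ x = p).
Proof.
  intro Hp; unfold elem; split.
  - intros [Hx H]; destruct (prime_euclid _ _ _ Hx H) as [H1 | H1]; [tauto|].
    right; exact (prime_divides_prime _ _ Hx Hp H1).
  - intros [[Hx H] | ->]; split; auto using divides_mul_r, divides_mul_l.
Qed.

Lemma elem_1 x : ~ elem x 𝟏.
Proof. intros [[Hx _] H]; exact (le_ngt _ _ (divides_le _ _ H lt_0_1) Hx). Qed.

Lemma elem_mul_neq x F p : prime p -> elem x (F ⊗ p) -> x <> p -> elem x F.
Proof. intros Hp Hx Hxp; apply (elem_mul x F p Hp) in Hx as [Hx | Hx]; tauto. Qed.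

Lemma elem_mul_self p F : prime p -> elem p (F ⊗ p).
Proof. intro Hp; apply (elem_mul p F p Hp); right; reflexivity. Qed.

Lemma elem_mul_le F p : prime p -> (forall y, elem y F -> y ≺ p) ->
  forall x, elem x (F ⊗ p) -> x ≼ p.
Proof.
  intros Hp HF x Hx; apply (elem_mul x F p Hp) in Hx as [Hx | ->];
    [left; apply HF, Hx | right; reflexivity].
Qed.

Lemma mul_prime_pos F p : 𝟎 ≺ F -> prime p -> 𝟎 ≺ F ⊗ p.
Proof. intros HF Hp; exact (lt_le_trans _ _ _ HF (le_mul_pos_r F p (prime_pos p Hp))). Qed.

Lemma elem_lt_succ x F : 𝟎 ≺ F -> elem x F -> x ≺ F ⊕ 𝟏.
Proof. intros HF [_ H]; apply lt_succ_r, divides_le; assumption. Qed.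

(** * The construction *)

Section Construction.
Hypothesis HC : is_coloring A C.

Definition col (x y k : N) : Prop := mem A (pair A (pair A x y) k) C.

Lemma col_exists x y : x ≺ y -> exists k, col x y k.
Proof. apply HC. Qed.

Lemma col_unique x y k k' : x ≺ y -> col x y k -> col x y k' -> k = k'.
Proof. apply HC. Qed.

(* F codes the points chosen so far and G those of finite type; only the points of F below s
   are taken into account. *)
Definition respects (F G s i z : N) : Prop :=
  (elem i G -> forall w k, elem w F -> i ≺ w -> w ≺ s -> col i w k -> col i z k) /\
  (~ elem i G -> forall h k, elem h F -> h ≺ i -> col h i k -> ~ col i z k).

Definition respects_below (F G a s z : N) : Prop :=
  forall i, elem i F -> i ≺ a -> respects F G s i z.

Definition good_after (F G t z : N) : Prop :=
  prime z /\ t ≺ z /\ respects_below F G t (t ⊕ 𝟏) z.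

Definition recurs (F G t k : N) : Prop :=
  forall b, exists z, b ≺ z /\ good_after F G t z /\ col t z k.

Definition finite_type (F G t : N) : Prop := exists k, recurs F G t k.

Definition limit_color (F G t k : N) : Prop :=
  recurs F G t k /\ forall k', k' ≺ k -> ~ recurs F G t k'.

Definition max_below (F t p : N) : Prop :=
  elem p F /\ p ≺ t /\ forall q, elem q F -> q ≺ t -> q ≼ p.

(* The last point p of F below t has no later point to copy a color from; if it has finite
   type, its least recurring color is imposed directly. *)
Definition candidate (F G t z : N) : Prop :=
  prime z /\ (forall i, elem i F -> i ≺ t -> i ≺ z) /\ respects_below F G t t z /\
  (forall p k, max_below F t p -> elem p G -> limit_color F G p k -> col p z k).

Definition least_candidate (F G t z : N) : Prop :=
  candidate F G t z /\ forall z', candidate F G t z' -> z ≼ z'.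

Definition stage (F G : N) : Prop :=
  (forall x, elem x G -> elem x F) /\
  forall t, elem t F -> least_candidate F G t t /\ (elem t G <-> finite_type F G t).

(* F ⊕ 𝟏 exceeds every element of F, so these are the candidates for the next point. *)
Definition extendable (F G : N) : Prop :=
  forall b, exists z, b ≺ z /\ candidate F G (F ⊕ 𝟏) z.

Lemma candidate_gt F G t : 𝟎 ≺ F -> candidate F G (F ⊕ 𝟏) t -> forall x, elem x F -> x ≺ t.
Proof. intros HF0 Ht x Hx; exact (proj1 (proj2 Ht) x Hx (elem_lt_succ x F HF0 Hx)). Qed.

Definition agree (F1 F2 s : N) : Prop :=
  forall x, x ≺ s -> (elem x F1 <-> elem x F2).

Definition agree_types (F1 G1 G2 s : N) : Prop :=
  forall x, x ≺ s -> elem x F1 -> (elem x G1 <-> elem x G2).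

Lemma agree_refl F s : agree F F s.
Proof. intros x _; reflexivity. Qed.

Lemma agree_sym F1 F2 s : agree F1 F2 s -> agree F2 F1 s.
Proof. intros H x Hx; symmetry; exact (H x Hx). Qed.

Lemma agree_le F1 F2 a s : a ≼ s -> agree F1 F2 s -> agree F1 F2 a.
Proof. intros Has H x Hx; exact (H x (lt_le_trans _ _ _ Hx Has)). Qed.

Lemma agree_succ F1 F2 t : agree F1 F2 t -> (elem t F1 <-> elem t F2) -> agree F1 F2 (t ⊕ 𝟏).
Proof. intros H Ht x Hx; apply lt_succ_r in Hx as [Hx | ->]; [exact (H x Hx) | exact Ht]. Qed.

Lemma agree_types_sym F1 G1 F2 G2 s :
  agree F1 F2 s -> agree_types F1 G1 G2 s -> agree_types F2 G2 G1 s.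
Proof. intros HF HG x Hx H2; symmetry; exact (HG x Hx (proj2 (HF x Hx) H2)). Qed.

Lemma agree_types_le F G1 G2 a s : a ≼ s -> agree_types F G1 G2 s -> agree_types F G1 G2 a.
Proof. intros Has H x Hx; exact (H x (lt_le_trans _ _ _ Hx Has)). Qed.

Lemma respects_below_agree F1 G1 F2 G2 a s z :
  a ≼ s -> agree F1 F2 s -> agree_types F1 G1 G2 a ->
  respects_below F1 G1 a s z -> respects_below F2 G2 a s z.
Proof.
  intros Has HF HG H i Hi2 Hia.
  assert (His : i ≺ s) by exact (lt_le_trans _ _ _ Hia Has).
  assert (Hi1 : elem i F1) by exact (proj2 (HF i His) Hi2).
  destruct (H i Hi1 Hia) as [Hfin Hinf]; split.
  - intros HiG w k Hw Hiw Hws; apply Hfin; auto.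
    + apply (HG i Hia Hi1), HiG.
    + apply (HF w Hws), Hw.
  - intros HiG h k Hh Hhi; apply Hinf; auto.
    + rewrite (HG i Hia Hi1); exact HiG.
    + apply (HF h (lt_trans _ _ _ Hhi His)), Hh.
Qed.

Lemma good_after_agree F1 G1 F2 G2 t z : agree F1 F2 (t ⊕ 𝟏) -> agree_types F1 G1 G2 t ->
  good_after F1 G1 t z -> good_after F2 G2 t z.
Proof.
  intros HF HG [Hz [Htz H]]; split; [exact Hz | split; [exact Htz|]].
  exact (respects_below_agree _ _ _ _ _ _ _ (or_introl (lt_succ_diag_r t)) HF HG H).
Qed.

Lemma recurs_agree F1 G1 F2 G2 t k : agree F1 F2 (t ⊕ 𝟏) -> agree_types F1 G1 G2 t ->
  (recurs F1 G1 t k <-> recurs F2 G2 t k).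
Proof.
  intros HF HG.
  assert (HG' : agree_types F2 G2 G1 t)
    by exact (agree_types_sym _ _ _ _ _ (agree_le _ _ _ _ (or_introl (lt_succ_diag_r t)) HF) HG).
  split; intros H b; destruct (H b) as [z [Hbz [Hz Hcol]]]; exists z;
    eauto using good_after_agree, agree_sym.
Qed.

Lemma finite_type_agree F1 G1 F2 G2 t : agree F1 F2 (t ⊕ 𝟏) -> agree_types F1 G1 G2 t ->
  (finite_type F1 G1 t <-> finite_type F2 G2 t).
Proof.
  intros HF HG; split; intros [k Hk]; exists k;
    [rewrite <- (recurs_agree F1 G1 F2 G2) | rewrite (recurs_agree F1 G1 F2 G2)]; assumption.
Qed.

Lemma limit_color_agree F1 G1 F2 G2 t k : agree F1 F2 (t ⊕ 𝟏) -> agree_types F1 G1 G2 t ->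
  (limit_color F1 G1 t k <-> limit_color F2 G2 t k).
Proof.
  intros HF HG; unfold limit_color.
  setoid_rewrite (recurs_agree F1 G1 F2 G2 t _ HF HG); reflexivity.
Qed.

Lemma limit_color_unique F G t k k' : limit_color F G t k -> limit_color F G t k' -> k = k'.
Proof.
  intros [H1 H2] [H3 H4]; destruct (lt_trichotomy k k') as [H | [H | H]];
    [contradiction (H4 k H H1) | exact H | contradiction (H2 k' H H3)].
Qed.

Lemma limit_color_exists F G t : finite_type F G t -> exists k, limit_color F G t k.
Proof.
  intros [k Hk]; assert (HD : definable (recurs F G t)) by definability.
  destruct (definable_least _ HD k Hk) as [m [Hm Hmin]]; exists m; split; assumption.
Qed.

Lemma candidate_agree F1 G1 F2 G2 t z : agree F1 F2 t -> agree_types F1 G1 G2 t ->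
  candidate F1 G1 t z -> candidate F2 G2 t z.
Proof.
  intros HF HG [Hz [Hbound [Hresp Hpred]]]; split; [exact Hz | split; [| split]].
  - intros i Hi Hit; apply Hbound; [apply (HF i Hit), Hi | exact Hit].
  - exact (respects_below_agree _ _ _ _ _ _ _ (or_intror eq_refl) HF HG Hresp).
  - intros p k [Hp [Hpt Hmax]] HpG Hk.
    assert (Hp1 : elem p F1) by exact (proj2 (HF p Hpt) Hp).
    apply Hpred.
    + split; [exact Hp1 | split; [exact Hpt|]].
      intros q Hq Hqt; apply Hmax; [apply (HF q Hqt), Hq | exact Hqt].
    + apply (HG p Hpt Hp1), HpG.
    + rewrite (limit_color_agree F1 G1 F2 G2); [exact Hk | |].
      * exact (agree_le _ _ _ _ (le_succ_l _ _ Hpt) HF).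
      * exact (agree_types_le _ _ _ _ _ (or_introl Hpt) HG).
Qed.

Lemma candidate_change_bound F G t1 t2 z : (forall x, elem x F -> (x ≺ t1 <-> x ≺ t2)) ->
  candidate F G t1 z -> candidate F G t2 z.
Proof.
  intros Ht [Hz [Hbound [Hresp Hpred]]]; split; [exact Hz | split; [| split]].
  - intros i Hi Hit; apply Hbound; [exact Hi | apply (Ht i Hi), Hit].
  - intros i Hi Hit; destruct (Hresp i Hi (proj2 (Ht i Hi) Hit)) as [Hfin Hinf].
    split; [| exact Hinf].
    intros HiG w k Hw Hiw Hwt; apply Hfin; [exact HiG | exact Hw | exact Hiw |].
    apply (Ht w Hw), Hwt.
  - intros p k [Hp [Hpt Hmax]]; apply Hpred; split; [exact Hp | split; [apply (Ht p Hp), Hpt|]].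
    intros q Hq Hqt; apply Hmax; [exact Hq | apply (Ht q Hq), Hqt].
Qed.

Lemma least_candidate_agree F1 G1 F2 G2 t z : agree F1 F2 t -> agree_types F1 G1 G2 t ->
  least_candidate F1 G1 t z -> least_candidate F2 G2 t z.
Proof.
  intros HF HG [Hz Hmin]; split; [exact (candidate_agree _ _ _ _ _ _ HF HG Hz)|].
  intros z' Hz'; apply Hmin.
  exact (candidate_agree _ _ _ _ _ _ (agree_sym _ _ _ HF) (agree_types_sym _ _ _ _ _ HF HG) Hz').
Qed.

Lemma least_candidate_change_bound F G t1 t2 z : (forall x, elem x F -> (x ≺ t1 <-> x ≺ t2)) ->
  least_candidate F G t1 z -> least_candidate F G t2 z.
Proof.
  intros Ht [Hz Hmin]; split; [exact (candidate_change_bound _ _ _ _ _ Ht Hz)|].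
  intros z' Hz'; apply Hmin, (candidate_change_bound F G t2); [| exact Hz'].
  intros x Hx; symmetry; exact (Ht x Hx).
Qed.

Definition coherent (F1 G1 F2 G2 x : N) : Prop :=
  elem x F1 -> (exists u, elem u F2 /\ x ≼ u) -> elem x F2 /\ (elem x G1 <-> elem x G2).

(* If x were missing from F2, it would be a candidate for (F2, G2) at the least point u0 > x
   of F2, smaller than u0 itself. *)
Lemma coherent_step F1 G1 F2 G2 x : stage F1 G1 -> stage F2 G2 ->
  (forall y, y ≺ x -> coherent F1 G1 F2 G2 y /\ coherent F2 G2 F1 G1 y) ->
  coherent F1 G1 F2 G2 x.
Proof.
  intros HS1 HS2 IH Hx1 [u [Hu Hxu]].
  assert (Hbelow : forall y, y ≺ x -> exists u, elem u F2 /\ y ≼ u)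
    by (intros y Hy; exists u; split; [exact Hu | left; exact (lt_le_trans _ _ _ Hy Hxu)]).
  assert (HF : agree F1 F2 x).
  { intros y Hy; split; intro H.
    - exact (proj1 (proj1 (IH y Hy) H (Hbelow y Hy))).
    - exact (proj1 (proj2 (IH y Hy) H (ex_intro _ x (conj Hx1 (or_introl Hy))))). }
  assert (HG : agree_types F1 G1 G2 x)
    by (intros y Hy H; exact (proj2 (proj1 (IH y Hy) H (Hbelow y Hy)))).
  assert (Hx2 : elem x F2).
  { assert (HD : definable (fun u => elem u F2 /\ x ≼ u)) by definability.
    destruct (definable_least _ HD u (conj Hu Hxu)) as [u0 [[Hu0 [Hlt | <-]] Hmin]];
      [exfalso | exact Hu0].
    assert (Hcand : candidate F2 G2 u0 x).
    { apply (candidate_change_bound F2 G2 x).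
      - intros y Hy; split; intro H; [exact (lt_trans _ _ _ H Hlt)|].
        apply NNPP; intro Hn; exact (Hmin y H (conj Hy (nlt_ge _ _ Hn))).
      - exact (candidate_agree _ _ _ _ _ _ HF HG (proj1 (proj1 (proj2 HS1 x Hx1)))). }
    exact (le_ngt _ _ (proj2 (proj1 (proj2 HS2 u0 Hu0)) x Hcand) Hlt). }
  split; [exact Hx2|].
  rewrite (proj2 (proj2 HS1 x Hx1)), (proj2 (proj2 HS2 x Hx2)).
  apply finite_type_agree; [apply agree_succ; [exact HF | tauto] | exact HG].
Qed.

Lemma stages_coherent F1 G1 F2 G2 x u : stage F1 G1 -> stage F2 G2 ->
  elem x F1 -> elem u F2 -> x ≼ u -> elem x F2 /\ (elem x G1 <-> elem x G2).
Proof.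
  intros HS1 HS2 Hx Hu Hxu.
  enough (H : forall x, coherent F1 G1 F2 G2 x /\ coherent F2 G2 F1 G1 x)
    by exact (proj1 (H x) Hx (ex_intro _ u (conj Hu Hxu))).
  apply definable_strong_induction; [definability|].
  intros y IH; split; apply coherent_step; auto.
  intros w Hw; destruct (IH w Hw); split; assumption.
Qed.

Lemma candidate_after_max F G t T z :
  (forall x, elem x F -> x ≼ t) -> elem t F -> t ≺ T -> good_after F G t z ->
  (elem t G -> forall k, limit_color F G t k -> col t z k) ->
  (~ elem t G -> forall h k, elem h F -> h ≺ t -> col h t k -> ~ col t z k) ->
  candidate F G T z.
Proof.
  intros Hmax Ht HtT [Hz [Htz Hresp]] Hfin Hinf; split; [exact Hz | split; [| split]].
  - intros i Hi _; exact (le_lt_trans _ _ _ (Hmax i Hi) Htz).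
  - intros i Hi _; destruct (Hmax i Hi) as [Hit | ->].
    + destruct (Hresp i Hi Hit) as [Hfin' Hinf']; split; [| exact Hinf'].
      intros HiG w k Hw Hiw _; apply Hfin'; auto; apply lt_succ_r, Hmax, Hw.
    + split; [| exact Hinf].
      intros _ w k Hw Htw; contradiction (le_ngt _ _ (Hmax w Hw) Htw).
  - intros p k [Hp [_ Hpmax]] HpG Hk.
    assert (p = t) as -> by exact (le_antisymm _ _ (Hmax p Hp) (Hpmax t Ht HtT)).
    exact (Hfin HpG k Hk).
Qed.

Lemma stage_extend F G t G' : 𝟎 ≺ F -> stage F G -> least_candidate F G (F ⊕ 𝟏) t ->
  (forall x, x <> t -> (elem x G' <-> elem x G)) ->
  (elem t G' <-> finite_type (F ⊗ t) G' t) -> stage (F ⊗ t) G'.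
Proof.
  intros HF0 [HGF HS] Ht HG' Htype.
  assert (Htp : prime t) by exact (proj1 (proj1 Ht)).
  assert (HFt := candidate_gt F G t HF0 (proj1 Ht)).
  assert (Hagree : forall s, s ≼ t -> agree F (F ⊗ t) s).
  { intros s Hs x Hx; rewrite (elem_mul x F t Htp).
    pose proof (lt_neq _ _ (lt_le_trans _ _ _ Hx Hs)); tauto. }
  assert (Htypes : forall s, s ≼ t -> agree_types F G G' s).
  { intros s Hs x Hx _; symmetry; exact (HG' x (lt_neq _ _ (lt_le_trans _ _ _ Hx Hs))). }
  split.
  - intros x Hx; apply (elem_mul x F t Htp).
    destruct (classic (x = t)) as [-> | Hxt]; [right; reflexivity|].
    left; apply HGF, HG'; assumption.
  - intros s Hs; apply (elem_mul s F t Htp) in Hs as [Hs | ->].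
    + assert (Hst := HFt s Hs); destruct (HS s Hs) as [Hleast Hfin].
      assert (HGs := Htypes s (or_introl Hst)); split.
      * exact (least_candidate_agree _ _ _ _ _ _ (Hagree s (or_introl Hst)) HGs Hleast).
      * rewrite (HG' s (lt_neq _ _ Hst)), Hfin.
        exact (finite_type_agree _ _ _ _ _ (Hagree _ (le_succ_l _ _ Hst)) HGs).
    + split; [| exact Htype].
      apply (least_candidate_agree F G _ _ _ _ (Hagree t (or_intror eq_refl))
               (Htypes t (or_intror eq_refl))).
      apply (least_candidate_change_bound F G (F ⊕ 𝟏)); [| exact Ht].
      intros x Hx; split; intros _; [exact (HFt x Hx) | exact (elem_lt_succ x F HF0 Hx)].
Qed.

Lemma extendable_of_finite_type F G t : 𝟎 ≺ F -> (forall x, elem x F -> x ≼ t) ->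
  elem t F -> elem t G -> finite_type F G t -> extendable F G.
Proof.
  intros HF0 Hmax Ht HtG Hfin b.
  destruct (limit_color_exists _ _ _ Hfin) as [k Hk].
  destruct (proj1 Hk b) as [z [Hbz [Hgood Hcol]]]; exists z; split; [exact Hbz|].
  apply (candidate_after_max F G t); [exact Hmax | exact Ht | exact (elem_lt_succ _ _ HF0 Ht)
    | exact Hgood | | intro HnG; contradiction (HnG HtG)].
  intros _ k' Hk'; rewrite (limit_color_unique _ _ _ _ _ Hk' Hk); exact Hcol.
Qed.

(* A later candidate z still respects every point below t: for a point i of finite type, both t
   and z take the color of i's next point in F, or the limit color of i if i is the last one. *)
Lemma good_after_of_candidate F G t z : 𝟎 ≺ F -> stage F G ->
  candidate F G (F ⊕ 𝟏) t -> t ≺ z -> candidate F G (F ⊕ 𝟏) z -> good_after (F ⊗ t) G t z.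
Proof.
  intros HF0 HS [Htp [_ [Hrespt Hpredt]]] Htz [Hzp [_ [Hrespz Hpredz]]].
  split; [exact Hzp | split; [exact Htz|]].
  intros i Hi Hit.
  assert (HiF : elem i F) by exact (elem_mul_neq _ _ _ Htp Hi (lt_neq _ _ Hit)).
  assert (HiT : i ≺ F ⊕ 𝟏) by exact (elem_lt_succ _ _ HF0 HiF).
  destruct (Hrespz i HiF HiT) as [Zfin Zinf]; destruct (Hrespt i HiF HiT) as [Tfin _].
  split.
  - intros HiG w k Hw Hiw _ Hcol.
    apply (elem_mul w F t Htp) in Hw as [HwF | ->];
      [exact (Zfin HiG w k HwF Hiw (elem_lt_succ _ _ HF0 HwF) Hcol)|].
    destruct (classic (exists w, elem w F /\ i ≺ w)) as [[w [Hw Hiw']] | Hlast].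
    + destruct (col_exists i w Hiw') as [k' Hk'].
      rewrite (col_unique i t k k' Hit Hcol (Tfin HiG w k' Hw Hiw' (elem_lt_succ _ _ HF0 Hw) Hk')).
      exact (Zfin HiG w k' Hw Hiw' (elem_lt_succ _ _ HF0 Hw) Hk').
    + assert (Hmax : max_below F (F ⊕ 𝟏) i).
      { split; [exact HiF | split; [exact HiT|]].
        intros q Hq _; apply nlt_ge; intro Hiq; exact (Hlast (ex_intro _ q (conj Hq Hiq))). }
      destruct (limit_color_exists F G i (proj1 (proj2 (proj2 HS i HiF)) HiG)) as [l Hl].
      rewrite (col_unique i t k l Hit Hcol (Hpredt i l Hmax HiG Hl)).
      exact (Hpredz i l Hmax HiG Hl).
  - intros HiG h k Hh Hhi; apply Zinf; [exact HiG | | exact Hhi].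
    exact (elem_mul_neq _ _ _ Htp Hh (lt_neq _ _ (lt_trans _ _ _ Hhi Hit))).
Qed.

Lemma infinite_type_avoids_colors F G t : ~ finite_type F G t -> forall n, exists B,
  forall h k z, h ≺ n -> elem h F -> h ≺ t -> col h t k -> B ≺ z -> good_after F G t z ->
  ~ col t z k.
Proof.
  intros Hinf n; induction_on n.
  - exists 𝟎; intros h k z Hh; contradiction (nlt_0_r h Hh).
  - intros n [B HB]; destruct (classic (elem n F /\ n ≺ t)) as [[Hn Hnt] | Hn].
    + destruct (col_exists n t Hnt) as [kn Hkn].
      assert (Hrec : ~ recurs F G t kn) by (intro H; exact (Hinf (ex_intro _ kn H))).
      apply not_all_ex_not in Hrec as [bn Hbn].
      exists (B ⊕ bn); intros h k z Hh HhF Hht Hcol Hz Hgood Hcolz.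
      apply lt_succ_r in Hh as [Hh | ->].
      * exact (HB h k z Hh HhF Hht Hcol (le_lt_trans _ _ _ (le_add_r B bn) Hz) Hgood Hcolz).
      * rewrite (col_unique n t k kn Hnt Hcol Hkn) in Hcolz.
        exact (Hbn (ex_intro _ z (conj (le_lt_trans _ _ _ (le_add_l B bn) Hz) (conj Hgood Hcolz)))).
    + exists B; intros h k z Hh HhF Hht; apply lt_succ_r in Hh as [Hh | ->];
        [exact (HB h k z Hh HhF Hht) | contradiction (Hn (conj HhF Hht))].
Qed.

Lemma extendable_of_infinite_type F G t : 𝟎 ≺ F -> stage F G -> extendable F G ->
  candidate F G (F ⊕ 𝟏) t -> ~ finite_type (F ⊗ t) G t -> extendable (F ⊗ t) G.
Proof.
  intros HF0 HS Hext Ht Hinf b.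
  assert (Htp : prime t) by exact (proj1 Ht).
  assert (HFt := candidate_gt F G t HF0 Ht).
  destruct (infinite_type_avoids_colors _ _ _ Hinf t) as [B HB].
  destruct (Hext (b ⊕ B ⊕ t)) as [z [Hz Hcand]].
  assert (Hbound : forall a c, b ⊕ B ⊕ t = a ⊕ c -> a ≺ z)
    by (intros a c Hac; apply (le_lt_trans _ _ _ (proj2 (le_exists_add _ _) (ex_intro _ c Hac)));
        exact Hz).
  assert (Htz : t ≺ z) by (apply (Hbound t (b ⊕ B)); ring).
  assert (Hgood := good_after_of_candidate F G t z HF0 HS Ht Htz Hcand).
  exists z; split; [apply (Hbound b (B ⊕ t)); ring|].
  apply (candidate_after_max (F ⊗ t) G t);
    [exact (elem_mul_le _ _ Htp HFt) | exact (elem_mul_self t F Htp)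
    | exact (elem_lt_succ _ _ (mul_prime_pos F t HF0 Htp) (elem_mul_self t F Htp))
    | exact Hgood | |].
  - intros HtG; contradiction (lt_irrefl t (HFt t (proj1 HS t HtG))).
  - intros _ h k Hh Hht Hcol.
    exact (HB h k z Hht Hh Hht Hcol (Hbound B (b ⊕ t) ltac:(ring)) Hgood).
Qed.

Lemma stage_1 : stage 𝟏 𝟏.
Proof. split; intros x Hx; contradiction (elem_1 x Hx). Qed.

Lemma extendable_1 : extendable 𝟏 𝟏.
Proof.
  intro b; destruct (exists_prime_gt b) as [p [Hp Hbp]]; exists p; split; [exact Hbp|].
  split; [exact Hp | split; [| split]].
  - intros i Hi; contradiction (elem_1 i Hi).
  - intros i Hi; contradiction (elem_1 i Hi).
  - intros q k [Hq _]; contradiction (elem_1 q Hq).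
Qed.

Lemma stage_step F G : 𝟎 ≺ F -> stage F G -> extendable F G ->
  exists F' G' t, 𝟎 ≺ F' /\ stage F' G' /\ extendable F' G' /\ elem t F' /\
    forall x, elem x F -> x ≺ t.
Proof.
  intros HF0 HS Hext; destruct (Hext 𝟎) as [z0 [_ Hz0]].
  assert (HD : definable (candidate F G (F ⊕ 𝟏))) by definability.
  destruct (definable_least _ HD z0 Hz0) as [t [Ht Hmin]].
  assert (Hleast : least_candidate F G (F ⊕ 𝟏) t)
    by (split; [exact Ht | intros z Hz; apply nlt_ge; intro H; exact (Hmin z H Hz)]).
  assert (Htp : prime t) by exact (proj1 Ht).
  assert (HFt := candidate_gt F G t HF0 Ht).
  exists (F ⊗ t).
  destruct (classic (finite_type (F ⊗ t) G t)) as [Hfin | Hinf].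
  - assert (HG' : forall x, x <> t -> (elem x (G ⊗ t) <-> elem x G))
      by (intros x Hx; rewrite (elem_mul x G t Htp); tauto).
    assert (Hfin' : finite_type (F ⊗ t) (G ⊗ t) t).
    { apply (finite_type_agree (F ⊗ t) G); [apply agree_refl | | exact Hfin].
      intros x Hx _; symmetry; exact (HG' x (lt_neq _ _ Hx)). }
    exists (G ⊗ t), t; split; [exact (mul_prime_pos F t HF0 Htp)|].
    split; [| split; [| split; [exact (elem_mul_self t F Htp) | exact HFt]]].
    + apply (stage_extend F G t (G ⊗ t) HF0 HS Hleast HG').
      split; intros _; [exact Hfin' | exact (elem_mul_self t G Htp)].
    + exact (extendable_of_finite_type _ _ t (mul_prime_pos F t HF0 Htp) (elem_mul_le F t Htp HFt)
               (elem_mul_self t F Htp) (elem_mul_self t G Htp) Hfin').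
  - assert (HtG : ~ elem t G) by (intro H; exact (lt_irrefl t (HFt t (proj1 HS t H)))).
    exists G, t; split; [exact (mul_prime_pos F t HF0 Htp)|].
    split; [| split; [| split; [exact (elem_mul_self t F Htp) | exact HFt]]].
    + apply (stage_extend F G t G HF0 HS Hleast (fun x _ => iff_refl _)).
      split; intro; contradiction.
    + exact (extendable_of_infinite_type F G t HF0 HS Hext Ht Hinf).
Qed.

Lemma stages_unbounded n : exists F G t, stage F G /\ elem t F /\ n ≺ t.
Proof.
  assert (H : forall m, exists F G, 𝟎 ≺ F /\ stage F G /\ extendable F G /\
                          exists t, elem t F /\ m ≼ t).
  { intro m; induction_on m.
    - destruct (stage_step 𝟏 𝟏 lt_0_1 stage_1 extendable_1) as [F [G [t [HF0 [HS [He [Ht _]]]]]]].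
      exists F, G; do 3 (split; [assumption|]); exists t; split; [exact Ht | apply le_0_l].
    - intros m [F0 [G0 [HF0 [HS0 [He0 [t0 [Ht0 Hmt0]]]]]]].
      destruct (stage_step F0 G0 HF0 HS0 He0) as [F [G [t [HF [HS [He [Ht Hlt]]]]]]].
      exists F, G; do 3 (split; [assumption|]); exists t; split; [exact Ht|].
      exact (le_succ_l _ _ (le_lt_trans _ _ _ Hmt0 (Hlt t0 Ht0))). }
  destruct (H (n ⊕ 𝟏)) as [F [G [_ [HS [_ [t [Ht Hnt]]]]]]].
  exists F, G, t; split; [exact HS | split; [exact Ht|]].
  exact (lt_le_trans _ _ _ (lt_succ_diag_r n) Hnt).
Qed.

Lemma stage_no_repeat_at_infinite_type F G x y z k : stage F G ->
  elem x F -> elem y F -> elem z F -> x ≺ y -> y ≺ z -> ~ elem y G -> col x y k -> ~ col y z k.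
Proof.
  intros HS Hx Hy Hz Hxy Hyz HyG.
  destruct (proj1 (proj1 (proj2 HS z Hz))) as [_ [_ [Hresp _]]].
  exact (proj2 (Hresp y Hy Hyz) HyG x k Hx Hxy).
Qed.

Lemma stage_color_at_finite_type F G x y z k : stage F G ->
  elem x F -> elem y F -> elem z F -> x ≺ y -> y ≺ z -> elem x G -> col x y k -> col x z k.
Proof.
  intros HS Hx Hy Hz Hxy Hyz HxG.
  destruct (proj1 (proj1 (proj2 HS z Hz))) as [_ [_ [Hresp _]]].
  exact (proj1 (Hresp x Hx (lt_trans _ _ _ Hxy Hyz)) HxG y k Hy Hxy Hyz).
Qed.

Lemma transitive_set_of_infinite_types :
  (forall b, exists t, b ≺ t /\ exists F G, stage F G /\ elem t F /\ ~ elem t G) ->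
  exists S, infinite_set A S /\ transitive_on A C S.
Proof.
  intro Hunb.
  assert (HD : definable (fun t => exists F G, stage F G /\ elem t F /\ ~ elem t G))
    by definability.
  destruct (definable_comprehension _ HD) as [S HSdef]; exists S; split.
  - intro n; destruct (Hunb n) as [t [Hnt Ht]]; exists t; split; [exact Hnt | apply HSdef, Ht].
  - intros x y z k Hx Hy Hz Hxy Hyz Hxyk Hyzk; exfalso.
    apply HSdef in Hx as [F1 [G1 [HS1 [Hx1 _]]]].
    apply HSdef in Hy as [F2 [G2 [HS2 [Hy2 HyG2]]]].
    apply HSdef in Hz as [F3 [G3 [HS3 [Hz3 _]]]].
    destruct (stages_coherent _ _ _ _ y z HS2 HS3 Hy2 Hz3 (or_introl Hyz)) as [Hy3 HyG].
    destruct (stages_coherent _ _ _ _ x z HS1 HS3 Hx1 Hz3 (or_introl (lt_trans _ _ _ Hxy Hyz)))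
      as [Hx3 _].
    exact (stage_no_repeat_at_infinite_type _ _ _ _ _ _ HS3 Hx3 Hy3 Hz3 Hxy Hyz
             (fun H => HyG2 (proj2 HyG H)) Hxyk Hyzk).
Qed.

Lemma transitive_set_of_finite_types b0 :
  (forall t, b0 ≺ t -> forall F G, stage F G -> elem t F -> elem t G) ->
  exists S, infinite_set A S /\ transitive_on A C S.
Proof.
  intro Hfin.
  assert (HD : definable (fun t => b0 ≺ t /\ exists F G, stage F G /\ elem t F)) by definability.
  destruct (definable_comprehension _ HD) as [S HSdef]; exists S; split.
  - intro n; destruct (stages_unbounded (n ⊕ b0)) as [F [G [t [HS [Ht Hlt]]]]].
    exists t; split; [exact (le_lt_trans _ _ _ (le_add_r n b0) Hlt)|].
    apply HSdef; split; [exact (le_lt_trans _ _ _ (le_add_l n b0) Hlt) | exists F, G; auto].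
  - intros x y z k Hx Hy Hz Hxy Hyz Hxyk _.
    apply HSdef in Hx as [Hb0x [F1 [G1 [HS1 Hx1]]]].
    apply HSdef in Hy as [_ [F2 [G2 [HS2 Hy2]]]].
    apply HSdef in Hz as [_ [F3 [G3 [HS3 Hz3]]]].
    destruct (stages_coherent _ _ _ _ y z HS2 HS3 Hy2 Hz3 (or_introl Hyz)) as [Hy3 _].
    destruct (stages_coherent _ _ _ _ x z HS1 HS3 Hx1 Hz3 (or_introl (lt_trans _ _ _ Hxy Hyz)))
      as [Hx3 HxG].
    exact (stage_color_at_finite_type _ _ _ _ _ _ HS3 Hx3 Hy3 Hz3 Hxy Hyz
             (proj1 HxG (Hfin x Hb0x _ _ HS1 Hx1)) Hxyk).
Qed.

Lemma transitive_set_exists : exists S, infinite_set A S /\ transitive_on A C S.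
Proof.
  destruct (classic (forall b, exists t, b ≺ t /\
                        exists F G, stage F G /\ elem t F /\ ~ elem t G)) as [Hinf | Hfin].
  - exact (transitive_set_of_infinite_types Hinf).
  - apply not_all_ex_not in Hfin as [b0 Hb0]; apply (transitive_set_of_finite_types b0).
    intros t Hb0t F G HS Ht; apply NNPP; intro HtG.
    apply Hb0; exists t; split; [exact Hb0t | exists F, G; auto].
Qed.

End Construction.
End Model.

Theorem mainTheorem20 :
  forall A : L2structure, ACA0_model A -> EM_infinity A.
Proof.
  intros A HA C HC; exact (transitive_set_exists A HA C HC).
Qed.
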